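(* A finite connected arc-transitive circulant $\Gamma$ is a normal circulant if and only if $\mathrm{Aut}(\Gamma)$ contains exactly one cyclic subgroup that is regular on the vertex set of $\Gamma$.
   Context: A digraph is a pair $(V,A)$ with $A\subseteq V\times V$; it is connected if its underlying undirected graph is connected and arc-transitive if $\mathrm{Aut}(\Gamma)$ is transitive on $A$. A digraph is a circulant if $\mathrm{Aut}(\Gamma)$ has a finite cyclic subgroup regular on $V$, and a normal circulant if $\mathrm{Aut}(\Gamma)$ has a finite cyclic subgroup that is regular on $V$ and normal in $\mathrm{Aut}(\Gamma)$. *)

From mathcomp Require Import all_boot all_fingroup all_solvable.
Set Implicit Arguments. Unset Strict Implicit. Unset Printing Implicit Defensive.
Local Open Scope group_scope.

(* A digraph Gamma = (V, A) with V a finite type and arc relation A ⊆ V × V. *)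

Definition DAut (V : finType) (A : rel V) : {set {perm V}} :=
  [set g : {perm V} | [forall x, forall y, A (g x) (g y) == A x y]].

Definition dconnected (V : finType) (A : rel V) : Prop :=
  forall x y : V, connect (fun u v => A u v || A v u) x y.

Definition arc_transitive (V : finType) (A : rel V) : Prop :=
  forall x1 y1 x2 y2 : V, A x1 y1 -> A x2 y2 ->
    exists2 g, g \in DAut A & (g x1 = x2 /\ g y1 = y2).

Definition regular (V : finType) (H : {set {perm V}}) : Prop :=
  [transitive H, on [set: V] | 'P] /\ (forall x : V, 'C_H[x | 'P] = 1).

Definition circulant (V : finType) (A : rel V) : Prop :=
  exists H : {group {perm V}}, [/\ H \subset DAut A, cyclic H & regular H].

Definition normal_circulant (V : finType) (A : rel V) : Prop :=
  exists H : {group {perm V}},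
    [/\ H \subset DAut A, cyclic H, regular H & H <| DAut A].

(* Let H be a cyclic regular normal subgroup of G = Aut(A) and K = <k> another
   cyclic regular subgroup.  Write k = s w with w in H and s in the stabiliser
   G_v; s normalises H and acts faithfully on it.  As k ^+ #[s] lies in H and
   centralises s while #[k] = |H|, the group N = [H, <s>], image of the
   morphism x |-> [x, s] with kernel C_H(s), has order at most #[s].  For a
   generator u of H the #[s] distinct commutators [u, y], y in <s>, all lie in
   N, so they exhaust it.  By arc-transitivity and normality every u mapping v
   to an out-neighbour generates H, so each p in N equals some [u, y] and maps
   the out-neighbours of v to out-neighbours of v; translating by H, p
   preserves every in- and out-neighbourhood.  Thus v and p v are twins and the
   transposition (v, p v) is an automorphism normalising H, which a regular
   group on at least 5 points forbids unless p = 1.  Hence N = 1, s = 1 and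
   K = H.  On at most 4 points s acts on H as identity or inversion; in the
   second case (s w) ^+ 2 = 1 forces |H| <= 2, where inversion is trivial, so
   again s = 1.  Conversely, a unique
   cyclic regular subgroup is fixed by conjugation in G, hence normal. *)

From mathcomp Require Import all_boot all_fingroup all_solvable.
Set Implicit Arguments. Unset Strict Implicit. Unset Printing Implicit Defensive.
Local Open Scope group_scope.

Lemma exists_notin_seq (T : finType) (s : seq T) :
  size s < #|T| -> exists z, z \notin s.
Proof.
move=> lt_s_T; have /card_gt0P[z] : 0 < #|[predC s]|.
  by rewrite -(ltn_add2l #|s|) addn0 cardC (leq_ltn_trans (card_size s)).
by rewrite inE; exists z.
Qed.

Section RegularPermGroup.
Variables (V : finType) (H : {group {perm V}}).
Hypothesis regH : regular H.
Implicit Types (x y : V) (g h : {perm V}).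

Lemma regular_card_gt0 : 0 < #|V|.
Proof. by case: regH => /imsetP[x _ _] _; apply/card_gt0P; exists x. Qed.

Lemma regular_trans x y : exists2 h, h \in H & h x = y.
Proof.
have [trH _] := regH.
have /orbitP[h Hh <-] : y \in orbit 'P H x by rewrite (atransP trH) ?inE.
by exists h.
Qed.

Lemma regular_eq x g h : g \in H -> h \in H -> g x = h x -> g = h.
Proof.
move=> Hg Hh gh_x; have [_ stabH] := regH.
suff : g * h^-1 \in 'C_H[x | 'P] by rewrite stabH => /set1gP/divg1_eq.
rewrite inE groupM ?groupV //; apply/astab1P.
by rewrite /= apermE permM gh_x permK.
Qed.

Lemma card_regular : #|H| = #|V|.
Proof.
have [/card_gt0P[x _] [trH stabH]] := (regular_card_gt0, regH).
by rewrite -cardsT -(atransP trH x) ?inE // card_orbit stabH indexg1.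
Qed.

Lemma regular_cent_fix1 x g : g x = x -> g \in 'C(H) -> g = 1.
Proof.
move=> gx /centP cHg; apply/permP=> y; rewrite perm1.
have [h Hh <-] := regular_trans x y.
by rewrite -permM -(cHg h Hh) permM gx.
Qed.

Lemma regular_conj g : regular (H :^ g).
Proof.
have [trH stabH] := regH; split=> [|x].
  case/imsetP: trH => x _ Hx; apply/imsetP; exists (g x) => //.
  apply/eqP; rewrite eq_sym eqEcard subsetT -[g x]/('P%act x g) -setact_orbit.
  by rewrite card_setact -Hx leqnn.
rewrite -[x](permKV g) -[g _]/('P%act _ g) astab1_act -conjIg stabH.
by rewrite conjs1g.
Qed.

Lemma regular_tperm_norm a b : 4 < #|V| -> tperm a b \in 'N(H) -> a = b.
Proof.
move=> gt4V nHt; set t := tperm a b.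
have tz z : z != a -> z != b -> t z = z.
  by move=> za zb; rewrite tpermD // eq_sym.
(* h ^ t and h agree at any point outside {a, b, h^-1 a, h^-1 b}. *)
have cHt : t \in 'C(H).
  apply/centP=> h Hh; apply/esym/commgP/conjg_fixP.
  have [z] := exists_notin_seq (s := [:: a; b; h^-1 a; h^-1 b]) gt4V.
  rewrite !inE !negb_or => /and4P[za zb zha zhb].
  have hza : h z != a by apply: contra zha => /eqP <-; rewrite permK.
  have hzb : h z != b by apply: contra zhb => /eqP <-; rewrite permK.
  apply: (regular_eq (x := z)); rewrite ?memJ_norm //.
  by rewrite conjgE tpermV !permM tz // tz.
have [c] := exists_notin_seq (s := [:: a; b]) (ltnW (ltnW gt4V)).
rewrite !inE negb_or => /andP[ca cb].
have /permP/(_ a) := regular_cent_fix1 (tz c ca cb) cHt.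
by rewrite tpermL perm1.
Qed.

End RegularPermGroup.

Lemma regular_subset_eq (V : finType) (H K : {group {perm V}}) :
  regular H -> regular K -> K \subset H -> K = H.
Proof.
move=> regH regK sKH; apply: group_inj; apply/eqP.
by rewrite eqEcard sKH (card_regular regH) (card_regular regK) leqnn.
Qed.

Section CommutatorWithNormaliser.
Variables (gT : finGroupType) (H : {group gT}) (s : gT).
Hypotheses (abelH : abelian H) (nHs : s \in 'N(H)).

Lemma commg_norm_mem x : x \in H -> [~ x, s] \in H.
Proof. by move=> Hx; rewrite commgEl groupM ?groupV ?memJ_norm. Qed.

Lemma commg_morphM : {in H &, {morph (fun x => [~ x, s]) : x y / x * y}}.
Proof.
move=> x y Hx Hy /=; rewrite commMgJ conjgE.
by rewrite (centsP abelH _ (commg_norm_mem Hx) _ Hy) mulKg.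
Qed.

Let commgm := Morphism commg_morphM.

Lemma ker_commgm : 'ker commgm = 'C_H[s].
Proof.
by apply/setP=> x; rewrite [x \in 'C_H[s]]inE (sameP cent1P commgP) !inE.
Qed.

Lemma commgm_commgX u i : u \in H -> [~ u, s ^+ i] \in commgm @* H.
Proof.
move=> Hu; elim: i => [|i IHi]; first by rewrite commg1 group1.
rewrite expgSr commgMJ groupM ?(mem_morphim commgm) //.
have [x Hx _ ->] := morphimP IHi.
by rewrite conjRg [s ^ s]conjgE mulKg (mem_morphim commgm) ?memJ_norm.
Qed.

Lemma morphim_commgm : commgm @* H = [~: H, <[s]>].
Proof.
apply/eqP; rewrite eqEsubset gen_subG; apply/andP; split.
  by apply/subsetP=> _ /morphimP[x _ Hx ->]; apply: mem_commg (cycle_id s).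
by apply/subsetP=> _ /imset2P[u _ Hu /cycleP[i ->] ->]; apply: commgm_commgX.
Qed.

Lemma card_commg_cycle : #|H| = (#|'C_H[s]| * #|[~: H, <[s]>]|)%N.
Proof.
by rewrite -morphim_commgm card_morphim ker_commgm setIid Lagrange ?subsetIl.
Qed.

Lemma card_commg_cycle_le w :
  w \in H -> #|H| <= #[s * w] -> #|[~: H, <[s]>]| <= #[s].
Proof.
move=> Hw le_H_sw; set k := s * w.
have coset_kX i : (s ^+ i)^-1 * k ^+ i \in H.
  elim: i => [|i IHi]; first by rewrite !expg0 invg1 mulg1 group1.
  suff -> : (s ^+ i.+1)^-1 * k ^+ i.+1 = ((s ^+ i)^-1 * k ^+ i) ^ s * w.
    by rewrite groupM ?memJ_norm.
  by rewrite !expgSr invMg /k conjgE !mulgA.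
pose h := k ^+ #[s].
have Hh : h \in H by have := coset_kX #[s]; rewrite expg_order invg1 mul1g.
have Ch : h \in 'C_H[s].
  rewrite inE Hh; apply/cent1P.
  have hk : commute h k by apply/commute_sym/commuteX.
  have hw : commute h w by apply: (centsP abelH).
  by rewrite -(mulgK w s) -/k; apply: commuteM hk (commuteV hw).
have le_h : #[h] <= #|'C_H[s]| by rewrite orderE subset_leq_card ?cycle_subG.
have le_k : #[k] <= #[s] * #[h].
  by rewrite dvdn_leq ?muln_gt0 ?order_gt0 // order_dvdn expgM expg_order.
rewrite -(leq_pmul2l (cardG_gt0 'C_H[s])) -card_commg_cycle mulnC.
exact: leq_trans le_H_sw (leq_trans le_k (leq_mul (leqnn _) le_h)).
Qed.

Hypothesis faithful_s : 'C_<[s]>(H) = 1.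

Lemma commg_cycle_generatorE w u : w \in H -> #|H| <= #[s * w] ->
  <[u]> = H -> [~: H, <[s]>] = [set [~ u, y] | y in <[s]>].
Proof.
move=> Hw le_H_sw defH; have Hu : u \in H by rewrite -defH cycle_id.
apply/esym/eqP; rewrite eqEcard; apply/andP; split.
  by apply/subsetP=> _ /imsetP[y sy ->]; apply: mem_commg.
rewrite card_in_imset -?orderE ?(card_commg_cycle_le Hw) // => y1 y2 sy1 sy2.
rewrite !commgEl => /mulgI uy12.
have : y1 * y2^-1 \in 'C_<[s]>(H).
  rewrite inE groupM ?groupV //= -defH cent_cycle; apply/cent1P/commute_sym.
  by apply/commgP/conjg_fixP; rewrite conjgM uy12 conjgK.
by rewrite faithful_s => /set1gP/divg1_eq.
Qed.

End CommutatorWithNormaliser.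

Lemma cycle_generator_small (gT : finGroupType) (u x : gT) :
  #[u] <= 4 -> x \in <[u]> -> #[x] = #[u] -> x = u \/ x = u^-1.
Proof.
move=> le_u4 /cyclePmin[j lt_j ->]; rewrite orderXgcd invg_expg => ord_uj.
suff [-> | ->] : j = 1%N \/ j = #[u].-1 by [left; apply: expg1 | right].
move: #[u] le_u4 lt_j ord_uj => n.
by case: n => [|[|[|[|[|n]]]]] //; case: j => [|[|[|[|j]]]] //; auto.
Qed.

Lemma cyclic_small_normaliser (gT : finGroupType) (H : {group gT}) s w :
  cyclic H -> #|H| <= 4 -> s \in 'N(H) -> 'C_<[s]>(H) = 1 ->
  w \in H -> #|H| <= #[s * w] -> s = 1.
Proof.
move=> cycH le_H4 nHs faithful_s Hw le_H_sw; have [u defH] := cyclicP cycH.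
have ou : #[u] = #|H| by rewrite defH orderE.
have cent_s y : y \in <[s]> -> u ^ y = u -> y = 1.
  move=> sy uy; apply/set1gP; rewrite -faithful_s inE sy defH cent_cycle.
  by apply/cent1P/commute_sym/commgP/conjg_fixP.
apply: (cent_s s (cycle_id s)).
have [// | us] : u ^ s = u \/ u ^ s = u^-1.
  apply: cycle_generator_small; rewrite ?orderJ ?ou //.
  by rewrite -defH memJ_norm // defH cycle_id.
have s2 : s ^+ 2 = 1.
  by apply: (cent_s _ (mem_cycle _ _)); rewrite conjgM us conjVg us invgK.
have Hinv x : x \in H -> x ^ s = x^-1.
  by rewrite defH => /cycleP[i ->]; rewrite conjXg us expgVn.
have sw2 : (s * w) ^+ 2 = 1.
  have -> : (s * w) ^+ 2 = s ^+ 2 * (w ^ s * w).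
    by rewrite !expgS !expg0 !mulg1 conjgE !mulgA mulgK.
  by rewrite s2 Hinv // mulVg mulg1.
have le_H2 : #|H| <= 2.
  by apply: leq_trans le_H_sw (dvdn_leq _ _); rewrite ?order_dvdn ?sw2.
have u2 : u ^+ 2 = 1.
  apply/eqP; rewrite -order_dvdn ou; move: (cardG_gt0 H) le_H2.
  by case: #|H| => [|[|[|]]].
by rewrite us -(mulg1 u^-1) -u2 expgS expg1 mulKg.
Qed.

Section DigraphAutomorphisms.
Variables (V : finType) (A : rel V).

Lemma DAutP (g : {perm V}) :
  reflect (forall x y, A (g x) (g y) = A x y) (g \in DAut A).
Proof.
rewrite inE; apply: (iffP forallP) => [Ag x y | Ag x].
  by apply/eqP; have /forallP := Ag x; apply.
by apply/forallP=> y; rewrite Ag.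
Qed.

Lemma group_set_DAut : group_set (DAut A).
Proof.
apply/andP; split; first by apply/DAutP=> x y; rewrite !perm1.
apply/subsetP=> _ /mulsgP[g h /DAutP Ag /DAutP Ah ->].
by apply/DAutP=> x y; rewrite !permM Ah Ag.
Qed.

Canonical DAut_group := group group_set_DAut.

Lemma tperm_twins_DAut a b : (forall z, A a z = A b z) ->
  (forall z, A z a = A z b) -> tperm a b \in DAut A.
Proof.
move=> out_ab in_ab; apply/DAutP=> x y.
have -> : A (tperm a b x) (tperm a b y) = A x (tperm a b y).
  by case: tpermP => [-> | -> |]; rewrite ?out_ab.
by case: tpermP => [-> | -> |]; rewrite ?in_ab.
Qed.

End DigraphAutomorphisms.

Section NormalCirculant.
Variables (V : finType) (A : rel V) (H : {group {perm V}}).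
Hypotheses (connA : dconnected A) (arcA : arc_transitive A).
Hypotheses (nHA : H <| DAut A) (cycH : cyclic H) (regH : regular H).

Let sHA : H \subset DAut A := normal_sub nHA.
Let nHA_sub : DAut A \subset 'N(H) := normal_norm nHA.

Lemma arc_generator v u : u \in H -> A v (u v) -> <[u]> = H.
Proof.
move=> Hu Avu; have sUH : <[u]> \subset H by rewrite cycle_subG.
have arc_orbit x z : A x z -> orbit 'P <[u]> x = orbit 'P <[u]> z.
  move=> Axz; have [g Ag [gv guv]] := arcA Avu Axz.
  have <- : (u ^ g) x = z by rewrite conjgE !permM -gv permK guv.
  suff Uug : u ^ g \in <[u]>.
    by rewrite -[(u ^ g) x]/('P%act x (u ^ g)) orbit_act.
  have sUgH : <[u ^ g]> \subset H.
    by rewrite cycle_subG memJ_norm ?(subsetP nHA_sub).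
  have /eqP <- : <[u ^ g]> :==: <[u]>.
    by rewrite (eq_subG_cyclic cycH) // -!orderE orderJ.
  exact: cycle_id.
have closedU : closed (fun x z => A x z || A z x)
                      [pred x | orbit 'P <[u]> x == orbit 'P <[u]> v].
  by move=> x z; rewrite !inE => /orP[/arc_orbit -> | /arc_orbit ->].
apply/eqP; rewrite eqEsubset sUH; apply/subsetP=> h Hh.
have /eqP/orbit_eqP/orbitP[g Ug gv] : orbit 'P <[u]> (h v) == orbit 'P <[u]> v.
  by have := closed_connect closedU (connA v (h v)); rewrite !inE eqxx => <-.
by rewrite -(regular_eq regH (subsetP sUH g Ug) Hh gv).
Qed.

Section Stabiliser.
Variables (v : V) (s : {perm V}).
Hypotheses (As : s \in DAut A) (sv : s v = v).

Let nHs : s \in 'N(H) := subsetP nHA_sub s As.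
Let abelH : abelian H := cyclic_abelian cycH.
Let sSA : <[s]> \subset DAut A.
Proof. by rewrite cycle_subG. Qed.

Lemma cycle_stab_fix y : y \in <[s]> -> y v = v.
Proof.
have /subsetP sSCv : <[s]> \subset 'C[v | 'P].
  by rewrite cycle_subG; apply/astab1P.
by move=> /sSCv /astab1P.
Qed.

Lemma cycle_stab_faithful : 'C_<[s]>(H) = 1.
Proof.
apply/trivgP/subsetP=> y /setIP[sy cHy]; apply/set1gP.
exact: regular_cent_fix1 regH _ _ (cycle_stab_fix sy) cHy.
Qed.

Variable w : {perm V}.
Hypotheses (Hw : w \in H) (le_V_sw : #|V| <= #[s * w]).

Let le_H_sw : #|H| <= #[s * w].
Proof. by rewrite (card_regular regH). Qed.

Let sNH : [~: H, <[s]>] \subset H.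
Proof. by rewrite commg_subl cycle_subG. Qed.

Lemma commg_cycle_out_twins p x z :
  p \in [~: H, <[s]>] -> A x z -> A x (p z).
Proof.
move=> Np; have Hp := subsetP sNH p Np.
have out_v y0 : A v y0 -> A v (p y0).
  move=> Avy0; have [u Hu uv] := regular_trans regH v y0.
  have defH : <[u]> = H by apply: (arc_generator (v := v) Hu); rewrite uv.
  have defN :=
    commg_cycle_generatorE abelH nHs cycle_stab_faithful Hw le_H_sw defH.
  move: Np; rewrite defN => /imsetP[y sy ->].
  move/DAutP: (subsetP sSA y sy) => Ay; have yv := cycle_stab_fix sy.
  have yVv : y^-1 v = v by rewrite -{1}yv permK.
  by rewrite -uv commgEl conjgE !permM permK yVv -[X in A X _]yv Ay uv.
have [h Hh <-] := regular_trans regH v x; move=> Ahvz.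
move/DAutP: (subsetP sHA h Hh) => Ah.
rewrite -(permKV h (p z)) Ah -permM (centsP abelH p Hp _ (groupVr Hh)) permM.
by apply: out_v; rewrite -Ah permKV.
Qed.

Lemma commg_cycle_twins p : p \in [~: H, <[s]>] ->
  (forall x z, A x (p z) = A x z) /\ (forall x z, A (p x) z = A x z).
Proof.
have out_q q x z : q \in [~: H, <[s]>] -> A x (q z) = A x z.
  move=> Nq; apply/idP/idP; last exact: commg_cycle_out_twins.
  by move/(commg_cycle_out_twins (groupVr Nq)); rewrite permK.
move=> Np; split=> [|x z]; first by move=> x z; apply: out_q.
move/DAutP: (subsetP sHA p (subsetP sNH p Np)) => Ap.
by rewrite -{1}(permKV p z) Ap out_q ?groupV.
Qed.

Lemma stab_eq1_of_full_order : s = 1.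
Proof.
have [le_V4 | gt4V] := leqP #|V| 4.
  apply: cyclic_small_normaliser cycH _ nHs cycle_stab_faithful Hw le_H_sw.
  by rewrite (card_regular regH).
apply/set1gP; rewrite -cycle_stab_faithful inE cycle_id -cycle_subG /=.
apply/commG1P; rewrite commGC; apply/trivgP/subsetP=> p Np; apply/set1gP.
have [out_p in_p] := commg_cycle_twins Np.
have /(regular_tperm_norm regH gt4V) pv : tperm v (p v) \in 'N(H).
  apply: (subsetP nHA_sub).
  by apply: tperm_twins_DAut => z; rewrite ?in_p ?out_p.
by apply: (regular_eq regH (x := v)); rewrite ?(subsetP sNH) // perm1 -pv.
Qed.

End Stabiliser.

Lemma normal_circulant_unique (K : {group {perm V}}) :
  K \subset DAut A -> cyclic K -> regular K -> K = H.
Proof.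
move=> sKA cycK regK; have [k defK] := cyclicP cycK.
have /card_gt0P[v _] := regular_card_gt0 regH.
have [w Hw wv] := regular_trans regH v (k v).
have Ak : k \in DAut A by rewrite (subsetP sKA) // defK cycle_id.
have As : k * w^-1 \in DAut A by rewrite groupM ?groupV // (subsetP sHA).
have sv : (k * w^-1) v = v by rewrite permM -wv permK.
have le_V_sw : #|V| <= #[k * w^-1 * w].
  by rewrite mulgKV orderE -defK (card_regular regK).
have kw1 := stab_eq1_of_full_order As sv Hw le_V_sw.
apply: regular_subset_eq regH regK _.
by rewrite defK cycle_subG (divg1_eq kw1).
Qed.

End NormalCirculant.

Theorem proposition3p3 (V : finType) (A : rel V) :
  dconnected A -> arc_transitive A -> circulant A ->
  (normal_circulant A <->
   exists H : {group {perm V}},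
     [/\ H \subset DAut A, cyclic H, regular H &
       forall K : {group {perm V}},
         K \subset DAut A -> cyclic K -> regular K -> K = H]).
Proof.
move=> connA arcA _.
split=> [[H [sHA cycH regH nHA]] | [H [sHA cycH regH uniqH]]].
  by exists H; split=> // K; apply: normal_circulant_unique.
exists H; split=> //; rewrite /normal sHA; apply/subsetP=> g Ag; rewrite inE.
suff -> : H :^ g = H by exact: subxx.
apply: (congr1 val (uniqH (H :^ g)%G _ _ _)); rewrite ?cyclicJ //.
  by apply/subsetP=> _ /imsetP[h Hh ->]; rewrite groupJ // (subsetP sHA).
exact: regular_conj.
Qed.
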